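(* Let $\mathbf g=(g_1,\dots,g_s)$, $Q=\mathcal Q(\mathbf g)$ and $J=\sqrt[\mathbb R]{\operatorname{supp}Q}$. Then for every $d\in\mathbb N$ there exists $k\ge d$ such that $J_d=J\cap\mathbb R[\mathbf X]_d\subseteq\overline{\mathcal Q_k(\mathbf g)}$, the closure being taken in $\mathbb R[\mathbf X]_k$.
   Context: $\mathbb R[\mathbf X]=\mathbb R[X_1,\dots,X_n]$, $\mathbb R[\mathbf X]_t$ polynomials of degree $\le t$ with Euclidean topology; $\Sigma^2$ sums of squares, $\Sigma^2_t=\Sigma^2\cap\mathbb R[\mathbf X]_t$. $\mathcal Q_t(\mathbf g)=\{s_0+\sum_js_jg_j:s_0\in\Sigma^2_t,s_j\in\Sigma^2,\deg s_j\le t-\deg g_j\}$, $\mathcal Q(\mathbf g)=\bigcup_t\mathcal Q_t(\mathbf g)$, $\operatorname{supp}Q=Q\cap(-Q)$, $\sqrt[\mathbb R]{I}=\{p:\exists m\in\mathbb N, s\in\Sigma^2,\ p^{2m}+s\in I\}$. *)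

From HB Require Import structures.
From mathcomp Require Import all_boot all_order all_algebra.
From mathcomp Require Import reals.
From mathcomp Require Import mpoly.

Set Implicit Arguments.
Unset Strict Implicit.
Unset Printing Implicit Defensive.

Import Order.TTheory GRing.Theory Num.Theory.
Local Open Scope ring_scope.

(* Polynomials R[X_1..X_n] are {mpoly R[n]}; total degree of p <= t
   (0 counts as having every degree <= t). *)
Definition deg_le (R : realType) (n : nat) (p : {mpoly R[n]}) (t : nat) : bool :=
  (msize p <= t.+1)%N.

Definition tdeg (R : realType) (n : nat) (p : {mpoly R[n]}) : nat := (msize p).-1.

Definition is_sos (R : realType) (n : nat) (p : {mpoly R[n]}) : Prop :=
  exists (m : nat) (q : 'I_m -> {mpoly R[n]}), p = \sum_(i < m) q i ^+ 2.

Definition in_Qt (R : realType) (n s : nat) (g : 'I_s -> {mpoly R[n]}) (t : nat)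
    (p : {mpoly R[n]}) : Prop :=
  exists (s0 : {mpoly R[n]}) (sj : 'I_s -> {mpoly R[n]}),
    [/\ is_sos s0, deg_le s0 t,
        (forall j, is_sos (sj j) /\
                   (sj j = 0 \/ (tdeg (sj j) + tdeg (g j) <= t)%N))
      & p = s0 + \sum_(j < s) sj j * g j].

Definition in_Q (R : realType) (n s : nat) (g : 'I_s -> {mpoly R[n]})
    (p : {mpoly R[n]}) : Prop :=
  exists t : nat, in_Qt g t p.

Definition in_supp (R : realType) (n s : nat) (g : 'I_s -> {mpoly R[n]})
    (p : {mpoly R[n]}) : Prop :=
  in_Q g p /\ in_Q g (- p).

Definition in_real_radical (R : realType) (n : nat) (I : {mpoly R[n]} -> Prop)
    (p : {mpoly R[n]}) : Prop :=
  exists (m : nat) (sq : {mpoly R[n]}), is_sos sq /\ I (p ^+ (2 * m) + sq).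

(* p lies in the closure of S ∩ R[X]_k inside the finite-dimensional space
   R[X]_k (Euclidean topology = topology of the max-norm on coefficients). *)
Definition in_closure_k (R : realType) (n : nat) (S : {mpoly R[n]} -> Prop)
    (k : nat) (p : {mpoly R[n]}) : Prop :=
  deg_le p k /\
  forall eps : R, 0 < eps ->
    exists q : {mpoly R[n]}, [/\ S q, deg_le q k &
      forall m : 'X_{1..n}, `|p@_m - q@_m| < eps].

From HB Require Import structures.
From mathcomp Require Import all_boot all_order all_algebra.
From mathcomp Require Import reals.
From mathcomp Require Import mpoly.
From mathcomp Require Import zify ring lra.
From Stdlib Require Import Classical.
Import Order.TTheory GRing.Theory Num.Theory.
Local Open Scope ring_scope.

Set Implicit Arguments.
Unset Strict Implicit.

(* Call p "Q_K-bounded" when c + p and c - p lie in Q_K(g) for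
   every real c > 0.  Such a p of degree <= K lies in the closure of Q_K(g)
   inside R[X]_K, since c + p -> p as c -> 0.
   (1) Q_K(g) is a convex cone stable under multiplication by squares (up to
       a degree shift), so the Q_K-bounded polynomials form a vector space.
   (2) Halving: from c - r^2 in Q_K for all c > 0 one gets c - r in Q_K, via
       2c (c - r) = (c - r)^2 + (c^2 - r^2).  Iterating, an upper bound on
       p^(2^(j+1)) gives c +- p in Q_K for a large enough K.
   (3) If p^(2m) + sos lies in supp Q then -p^(2m) lies in Q, hence, after
       multiplying by a square, so does -p^(2^(m+1)); by (2) every p in the
       real radical J of supp Q is Q_K-bounded for some K depending on p.
   (4) J_d lies in a finite-dimensional space, so it is spanned by finitely
       many of its own elements; taking K large enough for all of them, (1)
       makes every element of J_d Q_K-bounded, whence the theorem. *)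

Section Degree.
Variables (R : realType) (n : nat).
Implicit Types (p q : {mpoly R[n]}).

Lemma deg_leE p t : deg_le p t = (tdeg p <= t)%N.
Proof. by rewrite /deg_le /tdeg; case: (msize p). Qed.

Lemma tdegC c : tdeg (c%:MP : {mpoly R[n]}) = 0%N.
Proof. by rewrite /tdeg msizeC; case: (c != 0). Qed.

Lemma tdegN p : tdeg (- p) = tdeg p.
Proof. by rewrite /tdeg msizeN. Qed.

Lemma tdegD p q : (tdeg (p + q) <= maxn (tdeg p) (tdeg q))%N.
Proof. by rewrite /tdeg; have := msizeD_le p q; lia. Qed.

Lemma tdegZ c p : (tdeg (c *: p) <= tdeg p)%N.
Proof. by rewrite /tdeg; have := msizeZ_le p c; lia. Qed.

Lemma tdegM p q : (tdeg (p * q) <= tdeg p + tdeg q)%N.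
Proof.
have [->|pn0] := eqVneq p 0; first by rewrite mul0r /tdeg msize0.
have [->|qn0] := eqVneq q 0; first by rewrite mulr0 /tdeg msize0.
rewrite /tdeg msizeM //.
have : (0 < msize p)%N by rewrite lt0n msize_poly_eq0.
have : (0 < msize q)%N by rewrite lt0n msize_poly_eq0.
move: (msize p) (msize q); lia.
Qed.

Lemma tdegX p k : (tdeg (p ^+ k) <= k * tdeg p)%N.
Proof.
elim: k => [|k IH]; first by rewrite expr0 -mpolyC1 tdegC.
by rewrite exprS mulSn; apply: leq_trans (tdegM _ _) _; rewrite leq_add2l.
Qed.

End Degree.

Section SumsOfSquares.
Variables (R : realType) (n : nat).
Implicit Types (p q h : {mpoly R[n]}).

Lemma sos0 : is_sos (0 : {mpoly R[n]}).
Proof. by exists 0%N, (fun _ => 0); rewrite big_ord0. Qed.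

Lemma sos_sq h : is_sos (h ^+ 2).
Proof. by exists 1%N, (fun _ => h); rewrite big_ord1. Qed.

Lemma sosD p q : is_sos p -> is_sos q -> is_sos (p + q).
Proof.
move=> [m1 [q1 ->]] [m2 [q2 ->]].
exists (m1 + m2)%N, (fun i => match split i with inl a => q1 a | inr b => q2 b end).
rewrite big_split_ord /=; congr (_ + _); apply: eq_bigr => i _.
  by rewrite (unsplitK (inl i)).
by rewrite (unsplitK (inr i)).
Qed.

Lemma sosZ c p : 0 <= c -> is_sos p -> is_sos (c *: p).
Proof.
move=> c0 [m [q ->]]; exists m, (fun i => Num.sqrt c *: q i).
by rewrite scaler_sumr; apply: eq_bigr => i _; rewrite exprZn sqr_sqrtr.
Qed.

Lemma sosMsq h p : is_sos p -> is_sos (h ^+ 2 * p).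
Proof.
move=> [m [q ->]]; exists m, (fun i => h * q i).
by rewrite mulr_sumr; apply: eq_bigr => i _; rewrite exprMn.
Qed.

Lemma sosC c : 0 <= c -> is_sos (c%:MP : {mpoly R[n]}).
Proof.
move=> c0; have -> : c%:MP = (Num.sqrt c)%:MP ^+ 2 :> {mpoly R[n]}.
  by rewrite -rmorphXn /= sqr_sqrtr.
exact: sos_sq.
Qed.

End SumsOfSquares.

Section TruncatedModule.
Variables (R : realType) (n s : nat) (g : 'I_s -> {mpoly R[n]}).
Implicit Types (p q h r : {mpoly R[n]}).

Lemma Qt_mono t t' p : (t <= t')%N -> in_Qt g t p -> in_Qt g t' p.
Proof.
move=> tt' [s0 [sj [sos_s0 deg_s0 sj_ok ->]]]; exists s0, sj; split => //.
  by move: deg_s0; rewrite !deg_leE => /leq_trans; apply.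
move=> j; have [sos_sj [sj0|deg_sj]] := sj_ok j; split => //; first by left.
by right; apply: leq_trans tt'.
Qed.

Lemma Qt_sos t p : is_sos p -> deg_le p t -> in_Qt g t p.
Proof.
move=> sos_p deg_p; exists p, (fun _ => 0); split => //.
  by move=> j; split; [exact: sos0 | left].
by rewrite big1 ?addr0 // => j _; rewrite mul0r.
Qed.

Lemma Qt_const t c : 0 <= c -> in_Qt g t c%:MP.
Proof. by move=> c0; apply: Qt_sos; [exact: sosC | rewrite deg_leE tdegC]. Qed.

Lemma QtD t p q : in_Qt g t p -> in_Qt g t q -> in_Qt g t (p + q).
Proof.
move=> [s0 [sj [sos_s0 deg_s0 sj_ok ->]]] [s0' [sj' [sos_s0' deg_s0' sj'_ok ->]]].
exists (s0 + s0'), (fun j => sj j + sj' j); split.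
- exact: sosD.
- move: deg_s0 deg_s0'; rewrite !deg_leE => a b.
  by apply: leq_trans (tdegD _ _) _; rewrite geq_max a b.
- move=> j; have [sos1 deg1] := sj_ok j; have [sos2 deg2] := sj'_ok j.
  split; first exact: sosD.
  case: deg1 => [->|deg1]; first by rewrite add0r.
  case: deg2 => [->|deg2]; first by rewrite addr0; right.
  right; apply: leq_trans (leq_add (tdegD _ _) (leqnn _)) _.
  by rewrite addn_maxl geq_max deg1 deg2.
- rewrite addrACA; congr (_ + _); rewrite -big_split /=.
  by apply: eq_bigr => j _; rewrite mulrDl.
Qed.

Lemma QtZ t c p : 0 <= c -> in_Qt g t p -> in_Qt g t (c *: p).
Proof.
move=> c0 [s0 [sj [sos_s0 deg_s0 sj_ok ->]]].
exists (c *: s0), (fun j => c *: sj j); split.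
- exact: sosZ.
- by move: deg_s0; rewrite !deg_leE; apply: leq_trans (tdegZ _ _).
- move=> j; have [sos_sj deg_sj] := sj_ok j; split; first exact: sosZ.
  case: deg_sj => [->|deg_sj]; first by rewrite scaler0; left.
  by right; apply: leq_trans deg_sj; rewrite leq_add2r tdegZ.
- rewrite scalerDr scaler_sumr; congr (_ + _).
  by apply: eq_bigr => j _; rewrite scalerAl.
Qed.

Lemma Qt_mulsq t h p : in_Qt g t p -> in_Qt g (t + 2 * tdeg h) (h ^+ 2 * p).
Proof.
move=> [s0 [sj [sos_s0 deg_s0 sj_ok ->]]].
have deg_h2 : (tdeg (h ^+ 2) <= 2 * tdeg h)%N by apply: tdegX.
exists (h ^+ 2 * s0), (fun j => h ^+ 2 * sj j); split.
- exact: sosMsq.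
- move: deg_s0; rewrite !deg_leE => deg_s0.
  by apply: leq_trans (tdegM _ _) _; rewrite addnC leq_add.
- move=> j; have [sos_sj deg_sj] := sj_ok j; split; first exact: sosMsq.
  case: deg_sj => [->|deg_sj]; first by rewrite mulr0; left.
  right; apply: leq_trans (leq_add (tdegM _ _) (leqnn _)) _.
  by rewrite -addnA addnC leq_add.
- rewrite mulrDr mulr_sumr; congr (_ + _).
  by apply: eq_bigr => j _; rewrite mulrA.
Qed.

(* Halving: 2c (c - r) = (c - r)^2 + (c^2 - r^2), so an upper bound on r^2
   by every positive constant yields one on r. *)
Lemma Qt_halve K D r : deg_le r D -> (2 * D <= K)%N ->
  (forall c : R, 0 < c -> in_Qt g K (c%:MP - r ^+ 2)) ->
  forall c : R, 0 < c -> in_Qt g K (c%:MP - r).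
Proof.
move=> deg_r DK bound_r2 c c0.
have halving : c%:MP - r =
    (2 * c)^-1 *: ((c%:MP - r) ^+ 2 + ((c ^+ 2)%:MP - r ^+ 2)).
  apply: (scalerI (a := 2 * c)); first by rewrite mulf_neq0 ?gt_eqF.
  rewrite scalerA mulfV ?mulf_neq0 ?gt_eqF // scale1r.
  by rewrite -mul_mpolyC rmorphXn rmorphM /= rmorph_nat; ring.
rewrite halving; apply: QtZ; first by rewrite invr_ge0; lra.
apply: QtD; last by apply: bound_r2; rewrite exprn_gt0.
apply: Qt_sos; first exact: sos_sq.
rewrite deg_leE; apply: leq_trans (tdegX _ _) _; apply: leq_trans DK.
rewrite leq_mul2l /=; apply: leq_trans (tdegD _ _) _.
by rewrite tdegC tdegN max0n -deg_leE.
Qed.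

Lemma Qt_root_pow2 j K d p : deg_le p d -> (2 ^ j.+1 * d <= K)%N ->
  (forall c : R, 0 < c -> in_Qt g K (c%:MP - p ^+ (2 ^ j.+1))) ->
  forall c : R, 0 < c -> in_Qt g K (c%:MP - p).
Proof.
elim: j d p => [|j IH] d p deg_p dK bound_p.
  by rewrite expn1 in dK bound_p; apply: (Qt_halve deg_p).
have deg_p2 : deg_le (p ^+ 2) (2 * d).
  move: deg_p; rewrite !deg_leE => deg_p.
  by apply: leq_trans (tdegX _ _) _; rewrite leq_mul2l deg_p orbT.
apply: (Qt_halve deg_p).
  by apply: leq_trans dK; rewrite leq_mul2r expnS leq_pmulr ?expn_gt0 ?orbT.
apply: (IH _ _ deg_p2); first by rewrite mulnA -expnSr.
by move=> c c0; rewrite -exprM -expnS; apply: bound_p.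
Qed.

End TruncatedModule.

Section Bounded.
Variables (R : realType) (n s : nat) (g : 'I_s -> {mpoly R[n]}).
Implicit Types (p q : {mpoly R[n]}).

Definition qbounded K p :=
  forall c : R, 0 < c -> in_Qt g K (c%:MP + p) /\ in_Qt g K (c%:MP - p).

Lemma qbounded_mono K K' p : (K <= K')%N -> qbounded K p -> qbounded K' p.
Proof.
by move=> KK' bp c c0; have [lo hi] := bp c c0; split; apply: Qt_mono KK' _.
Qed.

Lemma qbounded0 K : qbounded K 0.
Proof. by move=> c c0; rewrite subr0 addr0; split; apply: Qt_const; apply: ltW. Qed.

Lemma qboundedN K p : qbounded K p -> qbounded K (- p).
Proof. by move=> bp c c0; have [lo hi] := bp c c0; rewrite opprK; split. Qed.

Lemma qboundedD K p q : qbounded K p -> qbounded K q -> qbounded K (p + q).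
Proof.
move=> bp bq c c0; have c20 : 0 < c / 2 by lra.
have [lo_p hi_p] := bp _ c20; have [lo_q hi_q] := bq _ c20.
have halves : c%:MP = (c / 2)%:MP + (c / 2)%:MP :> {mpoly R[n]}.
  by rewrite -rmorphD /=; congr (_%:MP); lra.
by rewrite halves opprD; split; rewrite addrACA; apply: QtD.
Qed.

Lemma qboundedZ K a p : qbounded K p -> qbounded K (a *: p).
Proof.
wlog a0 : a p / 0 <= a.
  move=> nonneg bp; have [/nonneg|a_neg] := lerP 0 a; first exact.
  by rewrite -[a]opprK scaleNr -scalerN; apply: nonneg; [lra | exact: qboundedN].
move=> bp; have [->|an0] := eqVneq a 0; first by rewrite scale0r; apply: qbounded0.
have a_pos : 0 < a by rewrite lt_def an0.
move=> c c0; have [lo hi] := bp _ (divr_gt0 c0 a_pos).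
have scaled : c%:MP = a *: (c / a)%:MP :> {mpoly R[n]}.
  by rewrite -mul_mpolyC -rmorphM /= mulrC divfK.
by rewrite scaled -scalerBr -scalerDr; split; apply: QtZ.
Qed.

Lemma qbounded_sum K k (w : 'I_k -> R) (f : 'I_k -> {mpoly R[n]}) :
  (forall i, qbounded K (f i)) -> qbounded K (\sum_(i < k) w i *: f i).
Proof.
move=> bf; apply: (big_ind (qbounded K)); [exact: qbounded0 | exact: qboundedD |].
by move=> i _; apply: qboundedZ.
Qed.

(* Every element of the real radical of supp Q(g) is Q_K-bounded for some K:
   from -p^(2m) in Q(g), multiplying by the square of p^(2^m - m) gives an
   upper bound on p^(2^(m+1)), and iterated halving concludes. *)
Lemma real_radical_qbounded d p :
  in_real_radical (in_supp g) p -> deg_le p d -> exists K, qbounded K p.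
Proof.
move=> [m [sq [sos_sq [_ [t neg_Q]]]]] deg_p.
set t' := maxn t (tdeg sq).
have neg_pow : in_Qt g t' (- p ^+ (2 * m)).
  have -> : - p ^+ (2 * m) = - (p ^+ (2 * m) + sq) + sq by rewrite opprD addrNK.
  apply: QtD.
    by apply: Qt_mono neg_Q; rewrite leq_maxl.
  by apply: Qt_sos => //; rewrite deg_leE leq_maxr.
set h := p ^+ (2 ^ m - m).
have neg_pow2 : in_Qt g (t' + 2 * tdeg h) (- p ^+ (2 ^ m.+1)).
  have -> : - p ^+ (2 ^ m.+1) = h ^+ 2 * - p ^+ (2 * m).
    rewrite mulrN -!exprM -exprD; congr (- p ^+ _).
    by have := ltn_expl m (ltnSn 1); rewrite expnS; lia.
  exact: Qt_mulsq.
set K := maxn (t' + 2 * tdeg h) (2 ^ m.+1 * d).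
have upper : forall q, q ^+ (2 ^ m.+1) = p ^+ (2 ^ m.+1) ->
    forall c : R, 0 < c -> in_Qt g K (c%:MP - q ^+ (2 ^ m.+1)).
  move=> q -> c c0; apply: QtD; first exact/Qt_const/ltW.
  by apply: Qt_mono neg_pow2; rewrite leq_maxl.
have dK : (2 ^ m.+1 * d <= K)%N by rewrite leq_maxr.
have deg_Np : deg_le (- p) d by rewrite deg_leE tdegN -deg_leE.
exists K => c c0; split; last exact: Qt_root_pow2 deg_p dK (upper p erefl) c c0.
rewrite -[p]opprK; apply: Qt_root_pow2 deg_Np dK (upper _ _) c c0.
by rewrite expnS exprM sqrrN -exprM.
Qed.

(* A Q_K-bounded p of degree <= K lies in the closure of Q_K(g) in R[X]_K:
   it is the limit of c + p as c -> 0. *)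
Lemma qbounded_closure K p :
  qbounded K p -> deg_le p K -> in_closure_k (in_Qt g K) K p.
Proof.
move=> bp deg_p; split => // e e0; have e20 : 0 < e / 2 by lra.
exists ((e / 2)%:MP + p); split; first by have [] := bp _ e20.
  by rewrite deg_leE; apply: leq_trans (tdegD _ _) _; rewrite tdegC max0n -deg_leE.
move=> m; rewrite mcoeffD mcoeffC opprD addrA addrAC subrr add0r normrN.
by case: (m == 0%MM); rewrite /= ?mulr1 ?mulr0 ?normr0 // ger0_norm; lra.
Qed.

End Bounded.

Section FiniteSpan.
Variables (R : realType) (n d : nat).

Local Notation monomial := 'X_{1..n < d.+1}.
Local Notation N := #|{: monomial}|.

Definition coefv (p : {mpoly R[n]}) : 'rV[R]_N := \row_j p@_(enum_val j : monomial).

Definition coefmx (f : nat -> {mpoly R[n]}) k : 'M[R]_(k, N) :=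
  \matrix_(i < k) coefv (f i).

Definition in_span (f : nat -> {mpoly R[n]}) k (p : {mpoly R[n]}) :=
  exists w : 'I_k -> R, p = \sum_(i < k) w i *: f i.

Lemma mcoeff_high (p : {mpoly R[n]}) (m : 'X_{1..n}) :
  deg_le p d -> (d < mdeg m)%N -> p@_m = 0.
Proof.
move=> deg_p hm; apply/eqP; rewrite mcoeff_eq0; apply: msize_mdeg_ge.
exact: leq_trans deg_p hm.
Qed.

Lemma coefv_in_span f k p : (forall i, (i < k)%N -> deg_le (f i) d) ->
  deg_le p d -> (coefv p <= coefmx f k)%MS -> in_span f k p.
Proof.
move=> deg_f deg_p /submxP[w coefvE]; exists (fun i => w 0 i).
apply/mpolyP => m; rewrite raddf_sum /=; under eq_bigr do rewrite mcoeffZ.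
have [hm|hm] := ltnP (mdeg m) d.+1.
  have := congr1 (fun v : 'rV[R]_N => v 0 (enum_rank (BMultinom hm : monomial))) coefvE.
  rewrite /= !mxE enum_rankK /= => ->.
  by apply: eq_bigr => i _; rewrite !mxE enum_rankK.
rewrite (mcoeff_high deg_p hm) big1 // => i _.
by rewrite (mcoeff_high (deg_f _ (ltn_ord i)) hm) mulr0.
Qed.

Lemma coefmx_extend_rank f k p : ~~ (coefv p <= coefmx f k)%MS ->
  (\rank (coefmx f k) < \rank (coefmx (fun i => if i == k then p else f i) k.+1))%N.
Proof.
move=> p_out; set f' := fun i => _; apply: rank_ltmx.
have sub_f : (coefmx f k <= coefmx f' k.+1)%MS.
  apply/row_subP => i.
  have -> : row i (coefmx f k) = row (widen_ord (leqnSn k) i) (coefmx f' k.+1).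
    by rewrite !rowK /f' /= ltn_eqF.
  exact: row_sub.
have sub_p : (coefv p <= coefmx f' k.+1)%MS.
  have -> : coefv p = row ord_max (coefmx f' k.+1) by rewrite rowK /f' /= eqxx.
  exact: row_sub.
rewrite ltmxE sub_f; apply: contra p_out; exact: submx_trans.
Qed.

(* Any set P of polynomials of degree <= d is spanned by finitely many of its
   elements: greedily add elements of P outside the current row space. *)
Lemma finite_span (P : {mpoly R[n]} -> Prop) :
  (forall p, P p -> deg_le p d) ->
  exists k f, (forall i, (i < k)%N -> P (f i)) /\ forall p, P p -> in_span f k p.
Proof.
move=> P_deg; suff grow j : forall k f, (forall i, (i < k)%N -> P (f i)) ->
    (N - \rank (coefmx f k) <= j)%N ->
    exists k f, (forall i, (i < k)%N -> P (f i)) /\ forall p, P p -> in_span f k p.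
  by apply: (grow N 0%N (fun _ => 0)) => //; rewrite leq_subr.
elim: j => [|j IH] k f Pf rank_f.
  exists k, f; split => // p Pp; apply: coefv_in_span (P_deg p Pp) _.
    by move=> i /Pf /P_deg.
  by apply: submx_full; rewrite /row_full eqn_leq rank_leq_col -subn_eq0 -leqn0.
have [[p [Pp p_out]]|all_in] := classic (exists p, P p /\ ~~ (coefv p <= coefmx f k)%MS).
  apply: (IH k.+1 (fun i => if i == k then p else f i)).
    by move=> i; rewrite ltnS leq_eqVlt; case: eqP => [_ _|_ /Pf].
  have := coefmx_extend_rank p_out; lia.
exists k, f; split => // p Pp; apply: coefv_in_span (P_deg p Pp) _.
  by move=> i /Pf /P_deg.
by apply/negPn/negP => p_out; apply: all_in; exists p.
Qed.

End FiniteSpan.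

Lemma uniform_bound (B : nat -> nat -> Prop) k :
  (forall i K K', (K <= K')%N -> B i K -> B i K') ->
  (forall i, (i < k)%N -> exists K, B i K) ->
  exists K, forall i, (i < k)%N -> B i K.
Proof.
move=> B_mono; elim: k => [|k IH] B_ex; first by exists 0%N.
have [K1 H1] := IH (fun i hi => B_ex i (ltnW hi)).
have [K2 H2] := B_ex k (ltnSn k).
exists (maxn K1 K2) => i; rewrite ltnS leq_eqVlt => /orP[/eqP ->|hi].
  by apply: B_mono H2; rewrite leq_maxr.
by apply: B_mono (H1 i hi); rewrite leq_maxl.
Qed.

Theorem mainTheorem12 (R : realType) (n s : nat) (g : 'I_s -> {mpoly R[n]})
    (d : nat) :
  exists k : nat, (d <= k)%N /\
    forall p : {mpoly R[n]},
      in_real_radical (in_supp g) p -> deg_le p d ->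
      in_closure_k (in_Qt g k) k p.
Proof.
pose J_d p := in_real_radical (in_supp g) p /\ deg_le p d.
have [k [f [J_f span_f]]] := @finite_span R n d J_d (fun p Jp => Jp.2).
have [K bounded_f] : exists K, forall i, (i < k)%N -> qbounded g K (f i).
  apply: uniform_bound => [i K K'|i /J_f[rad_f deg_f]].
    exact: qbounded_mono.
  exact: real_radical_qbounded rad_f deg_f.
exists (maxn K d); split; first exact: leq_maxr.
move=> p rad_p deg_p; apply: qbounded_closure.
  have [w ->] := span_f p (conj rad_p deg_p).
  apply: qbounded_sum => i; apply: qbounded_mono (bounded_f i (ltn_ord i)).
  exact: leq_maxl.
by move: deg_p; rewrite !deg_leE => /leq_trans; apply; rewrite leq_maxr.
Qed.
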